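(* Let $Q_k^A,Q_k^B$ be the SDQ iterates, $Q_k^{\mathrm{err}}=Q_k^A-Q_k^B$, and $w_k^A,w_k^B$ the associated noise vectors (see context). Define \[ Q_{k+1}^{\mathrm{err}_U}=(I+\alpha\gamma DP\Pi_{Q_k^{\mathrm{err}_U}}-\alpha D)Q_k^{\mathrm{err}_U}+\alpha w_k^A-\alpha w_k^B, \] with initial vector $Q_0^{\mathrm{err}_U}\in\mathbb{R}^{|\mathcal{S}||\mathcal{A}|}$. If $Q_0^{\mathrm{err}_U}\ge Q_0^{\mathrm{err}}$ element-wise, then $Q_k^{\mathrm{err}_U}\ge Q_k^{\mathrm{err}}$ element-wise for all $k\ge0$.
   Context: Finite MDP with states $\mathcal{S}=\{1,\dots,|\mathcal{S}|\}$, actions $\mathcal{A}=\{1,\dots,|\mathcal{A}|\}$, transitions $P(s'|s,a)$, bounded deterministic reward $r(s,a,s')$, discount $\gamma\in(0,1)$. Sampling distribution $d(s,a)>0$ on $\mathcal{S}\times\mathcal{A}$; at iteration $k$, $(s_k,a_k)\sim d$ i.i.d., $s_k'\sim P(\cdot|s_k,a_k)$, $r_{k+1}=r(s_k,a_k,s_k')$. Constant step-size $\alpha\in(0,1)$. SDQ: only entry $(s_k,a_k)$ is updated, $Q_{k+1}^A(s_k,a_k)=Q_k^A(s_k,a_k)+\alpha\{r_{k+1}+\gamma Q_k^A(s_k',\arg\max_aQ_k^B(s_k',a))-Q_k^A(s_k,a_k)\}$ and symmetrically for $B$ with roles of $A,B$ swapped. Vector notation: $Q\in\mathbb{R}^{|\mathcal{S}||\mathcal{A}|}$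 stacks $Q(\cdot,1),\dots,Q(\cdot,|\mathcal{A}|)$, so $Q(s,a)=(e_a\otimes e_s)^TQ$. $D$ is the diagonal matrix with entry $d(s,a)$ at position $(s,a)$. $P\in\mathbb{R}^{|\mathcal{S}||\mathcal{A}|\times|\mathcal{S}|}$ has row $(s,a)$ equal to $P(\cdot|s,a)$. $R(s,a)=\mathbb{E}[r(s,a,s')|s,a]$. For $Q$, $\pi_Q(s)=\arg\max_aQ(s,a)$ (fixed tie-breaking) and $\Pi_Q\in\mathbb{R}^{|\mathcal{S}|\times|\mathcal{S}||\mathcal{A}|}$ has $s$-th row $e_{\pi_Q(s)}^T\otimes e_s^T$. Noise: $w_k^A=(e_{a_k}\otimes e_{s_k})r_{k+1}+\gamma(e_{a_k}\otimes e_{s_k})e_{s_k'}^T\Pi_{Q_k^B}Q_k^A-(e_{a_k}\otimes e_{s_k})(e_{a_k}\otimes e_{s_k})^TQ_k^A-(DR+\gamma DP\Pi_{Q_k^B}Q_k^A-DQ_k^A)$, and $w_k^B$ is the same with $A$ and $B$ swapped. *)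

From HB Require Import structures.
From mathcomp Require Import all_boot all_order all_algebra.
From mathcomp Require Import reals.
Set Implicit Arguments. Unset Strict Implicit. Unset Printing Implicit Defensive.
Import Order.TTheory GRing.Theory Num.Theory.
Local Open Scope ring_scope.

(* Q-vectors in R^{|S||A|} are represented as functions S -> A -> R,
   Q s a = (e_a (x) e_s)^T Q.  Matrix-vector products are written entrywise. *)
Definition qvec (R : realType) (S A : finType) := S -> A -> R.

Definition is_argmax_rule (R : realType) (A : finType) (pick : (A -> R) -> A) :=
  forall (f : A -> R) (a : A), f a <= f (pick f).

Definition greedy (R : realType) (S A : finType) (pick : (A -> R) -> A)
  (Q : qvec R S A) (s : S) : A := pick (Q s).

Definition PiQ (R : realType) (S A : finType) (pick : (A -> R) -> A)
  (Q Q' : qvec R S A) (s : S) : R := Q' s (greedy pick Q s).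

Definition DPPi (R : realType) (S A : finType) (pick : (A -> R) -> A)
  (d : S -> A -> R) (P : S -> A -> S -> R) (Q Q' : qvec R S A) : qvec R S A :=
  fun s a => d s a * \sum_(s' : S) P s a s' * PiQ pick Q Q' s'.

Definition Rexp (R : realType) (S A : finType)
  (P : S -> A -> S -> R) (r : S -> A -> S -> R) (s : S) (a : A) : R :=
  \sum_(s' : S) P s a s' * r s a s'.

(* indicator (e_a (x) e_s)(x,y) *)
Definition ind (R : realType) (S A : finType) (s : S) (a : A) (x : S) (y : A) : R :=
  if (x == s) && (y == a) then 1 else 0.
Arguments ind {R S A} s a x y.

Definition sdq_upd (R : realType) (S A : finType) (pick : (A -> R) -> A)
  (alpha gamma : R) (r : S -> A -> S -> R) (s : S) (a : A) (s' : S)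
  (QA QB : qvec R S A) : qvec R S A :=
  fun x y => if (x == s) && (y == a) then
               QA x y + alpha * (r s a s' + gamma * QA s' (greedy pick QB s') - QA x y)
             else QA x y.

Fixpoint sdq (R : realType) (S A : finType) (pick : (A -> R) -> A)
  (alpha gamma : R) (r : S -> A -> S -> R)
  (sk : nat -> S) (ak : nat -> A) (sk' : nat -> S)
  (QA0 QB0 : qvec R S A) (k : nat) : qvec R S A * qvec R S A :=
  match k with
  | 0 => (QA0, QB0)
  | k.+1 =>
      let QAB := sdq pick alpha gamma r sk ak sk' QA0 QB0 k in
      (sdq_upd pick alpha gamma r (sk k) (ak k) (sk' k) QAB.1 QAB.2,
       sdq_upd pick alpha gamma r (sk k) (ak k) (sk' k) QAB.2 QAB.1)
  end.

(* Noise  w = (e_a(x)e_s) r + gamma (e_a(x)e_s) e_{s'}^T Pi_{Q2} Q1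
              - (e_a(x)e_s)(e_a(x)e_s)^T Q1 - (D R + gamma D P Pi_{Q2} Q1 - D Q1);
   w^A = noise .. QA QB, w^B = noise .. QB QA. *)
Definition noise (R : realType) (S A : finType) (pick : (A -> R) -> A)
  (gamma : R) (d : S -> A -> R) (P : S -> A -> S -> R) (r : S -> A -> S -> R)
  (s : S) (a : A) (s' : S) (Q1 Q2 : qvec R S A) : qvec R S A :=
  fun x y =>
    ind s a x y * r s a s'
    + gamma * (ind s a x y * PiQ pick Q2 Q1 s')
    - ind s a x y * Q1 s a
    - (d x y * Rexp P r x y + gamma * DPPi pick d P Q2 Q1 x y - d x y * Q1 x y).

Definition wA (R : realType) (S A : finType) (pick : (A -> R) -> A)
  (alpha gamma : R) (d : S -> A -> R) (P : S -> A -> S -> R) (r : S -> A -> S -> R)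
  (sk : nat -> S) (ak : nat -> A) (sk' : nat -> S) (QA0 QB0 : qvec R S A) (k : nat)
  : qvec R S A :=
  let QAB := sdq pick alpha gamma r sk ak sk' QA0 QB0 k in
  noise pick gamma d P r (sk k) (ak k) (sk' k) QAB.1 QAB.2.

Definition wB (R : realType) (S A : finType) (pick : (A -> R) -> A)
  (alpha gamma : R) (d : S -> A -> R) (P : S -> A -> S -> R) (r : S -> A -> S -> R)
  (sk : nat -> S) (ak : nat -> A) (sk' : nat -> S) (QA0 QB0 : qvec R S A) (k : nat)
  : qvec R S A :=
  let QAB := sdq pick alpha gamma r sk ak sk' QA0 QB0 k in
  noise pick gamma d P r (sk k) (ak k) (sk' k) QAB.2 QAB.1.

Definition Qerr (R : realType) (S A : finType) (pick : (A -> R) -> A)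
  (alpha gamma : R) (r : S -> A -> S -> R)
  (sk : nat -> S) (ak : nat -> A) (sk' : nat -> S) (QA0 QB0 : qvec R S A) (k : nat)
  : qvec R S A :=
  let QAB := sdq pick alpha gamma r sk ak sk' QA0 QB0 k in
  fun x y => QAB.1 x y - QAB.2 x y.

Fixpoint QerrU (R : realType) (S A : finType) (pick : (A -> R) -> A)
  (alpha gamma : R) (d : S -> A -> R) (P : S -> A -> S -> R) (r : S -> A -> S -> R)
  (sk : nat -> S) (ak : nat -> A) (sk' : nat -> S) (QA0 QB0 QU0 : qvec R S A) (k : nat)
  : qvec R S A :=
  match k with
  | 0 => QU0
  | k.+1 =>
      let QU := QerrU pick alpha gamma d P r sk ak sk' QA0 QB0 QU0 k in
      fun x y =>
        QU x y + alpha * gamma * DPPi pick d P QU QU x y - alpha * d x y * QU x y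
        + alpha * wA pick alpha gamma d P r sk ak sk' QA0 QB0 k x y
        - alpha * wB pick alpha gamma d P r sk ak sk' QA0 QB0 k x y
  end.

From HB Require Import structures.
From mathcomp Require Import all_boot all_order all_algebra.
From mathcomp Require Import reals.
From mathcomp Require Import lra.
Set Implicit Arguments. Unset Strict Implicit. Unset Printing Implicit Defensive.
Import Order.TTheory GRing.Theory Num.Theory.
Local Open Scope ring_scope.

(* Both tables follow  Q' = Q + alpha (F(Q) + w)  with the same drift
   F(Q1, Q2) = D R + gamma D P Pi_{Q2} Q1 - D Q1, so the rewards cancel in the
   error and  Q^err_{k+1} = (I - alpha D) Q^err_k
                           + alpha gamma D P (Pi_{Q^B} Q^A - Pi_{Q^A} Q^B) + alpha (w^A - w^B).
   Greediness gives  Pi_{Q^B} Q^A - Pi_{Q^A} Q^B <= Pi_U U  whenever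
   Q^A - Q^B <= U, and  I - alpha D  is a nonnegative diagonal since d <= 1,
   so the gap  Q^errU - Q^err  stays nonnegative by induction. *)

Lemma ler_sum2_entry (R : numDomainType) (I J : finType) (F : I -> J -> R) :
  (forall i j, 0 <= F i j) -> forall i j, F i j <= \sum_i' \sum_j' F i' j'.
Proof.
move=> F_ge0 i j; rewrite (bigD1 i) //= (bigD1 j) //= -addrA lerDl.
by apply: addr_ge0; apply: sumr_ge0 => *; last apply: sumr_ge0 => *.
Qed.

Section Greedy.
Variables (R : realType) (S A : finType) (pick : (A -> R) -> A).
Hypothesis pick_max : is_argmax_rule pick.

Lemma PiQ_cross_le (Q1 Q2 U : qvec R S A) (s : S) :
  (forall a, Q1 s a - Q2 s a <= U s a) ->
  PiQ pick Q2 Q1 s - PiQ pick Q1 Q2 s <= PiQ pick U U s.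
Proof.
rewrite /PiQ /greedy => le_U.
have := pick_max (Q1 s) (pick (Q2 s)); have := le_U (pick (Q1 s)).
have := pick_max (U s) (pick (Q1 s)); lra.
Qed.

Lemma DPPi_cross_le (d : S -> A -> R) (P : S -> A -> S -> R)
    (Q1 Q2 U : qvec R S A) (s : S) (a : A) :
  0 <= d s a -> (forall s', 0 <= P s a s') ->
  (forall s' a', Q1 s' a' - Q2 s' a' <= U s' a') ->
  DPPi pick d P Q2 Q1 s a - DPPi pick d P Q1 Q2 s a <= DPPi pick d P U U s a.
Proof.
move=> d_ge0 P_ge0 le_U; rewrite /DPPi -mulrBr ler_wpM2l // -sumrB.
by apply: ler_sum => s' _; rewrite -mulrBr ler_wpM2l // PiQ_cross_le.
Qed.

End Greedy.

Definition drift (R : realType) (S A : finType) (pick : (A -> R) -> A)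
  (gamma : R) (d : S -> A -> R) (P : S -> A -> S -> R) (r : S -> A -> S -> R)
  (Q1 Q2 : qvec R S A) : qvec R S A :=
  fun x y => d x y * Rexp P r x y + gamma * DPPi pick d P Q2 Q1 x y - d x y * Q1 x y.

Lemma sdq_upd_driftE (R : realType) (S A : finType) (pick : (A -> R) -> A)
    (alpha gamma : R) (d : S -> A -> R) (P : S -> A -> S -> R)
    (r : S -> A -> S -> R) (s : S) (a : A) (s' : S) (Q1 Q2 : qvec R S A) x y :
  sdq_upd pick alpha gamma r s a s' Q1 Q2 x y
  = Q1 x y + alpha * (drift pick gamma d P r Q1 Q2 x y
                      + noise pick gamma d P r s a s' Q1 Q2 x y).
Proof.
rewrite /sdq_upd /drift /noise /ind /PiQ.
by case: ifP => [/andP[/eqP-> /eqP->]|_]; rewrite ?mul1r ?mul0r; lra.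
Qed.

Section Comparison.
Variables (R : realType) (S A : finType) (pick : (A -> R) -> A).
Variables (alpha gamma : R) (d : S -> A -> R) (P : S -> A -> S -> R).
Variables (r : S -> A -> S -> R) (sk : nat -> S) (ak : nat -> A) (sk' : nat -> S).
Variables (QA0 QB0 QU0 : qvec R S A).

Let QA k := (sdq pick alpha gamma r sk ak sk' QA0 QB0 k).1.
Let QB k := (sdq pick alpha gamma r sk ak sk' QA0 QB0 k).2.
Let Qe := Qerr pick alpha gamma r sk ak sk' QA0 QB0.
Let QU := QerrU pick alpha gamma d P r sk ak sk' QA0 QB0 QU0.
Let w k x y := wA pick alpha gamma d P r sk ak sk' QA0 QB0 k x y
             - wB pick alpha gamma d P r sk ak sk' QA0 QB0 k x y.

Lemma QerrS k x y :
  Qe k.+1 x y = (1 - alpha * d x y) * Qe k x y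
    + alpha * gamma * (DPPi pick d P (QB k) (QA k) x y
                       - DPPi pick d P (QA k) (QB k) x y)
    + alpha * w k x y.
Proof.
rewrite /Qe /w /Qerr /wA /wB /= !(sdq_upd_driftE _ _ _ d P) /drift -/(QA k) -/(QB k).
lra.
Qed.

Lemma QerrUS k x y :
  QU k.+1 x y = (1 - alpha * d x y) * QU k x y
    + alpha * gamma * DPPi pick d P (QU k) (QU k) x y + alpha * w k x y.
Proof. rewrite /QU /w /=; lra. Qed.

Lemma QerrU_gapS k x y :
  QU k.+1 x y - Qe k.+1 x y = (1 - alpha * d x y) * (QU k x y - Qe k x y)
    + alpha * gamma * (DPPi pick d P (QU k) (QU k) x y
        - (DPPi pick d P (QB k) (QA k) x y - DPPi pick d P (QA k) (QB k) x y)).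
Proof. rewrite QerrS QerrUS; lra. Qed.

End Comparison.

Theorem proposition3 (R : realType) (S A : finType)
  (pick : (A -> R) -> A) (Hpick : is_argmax_rule pick)
  (P : S -> A -> S -> R)
  (HP0 : forall s a s', 0 <= P s a s')
  (HP1 : forall s a, \sum_(s' : S) P s a s' = 1)
  (r : S -> A -> S -> R)
  (d : S -> A -> R)
  (Hd0 : forall s a, 0 < d s a)
  (Hd1 : \sum_(s : S) \sum_(a : A) d s a = 1)
  (gamma alpha : R)
  (Hgamma : 0 < gamma < 1) (Halpha : 0 < alpha < 1)
  (sk : nat -> S) (ak : nat -> A) (sk' : nat -> S)
  (QA0 QB0 QU0 : qvec R S A) :
  (forall s a, Qerr pick alpha gamma r sk ak sk' QA0 QB0 0 s a <= QU0 s a) ->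
  forall (k : nat) (s : S) (a : A),
    Qerr pick alpha gamma r sk ak sk' QA0 QB0 k s a
    <= QerrU pick alpha gamma d P r sk ak sk' QA0 QB0 QU0 k s a.
Proof.
move=> le_QU0 k; elim: k => [|k IHk] x y; first exact: le_QU0.
have d_ge0 s a : 0 <= d s a by apply: ltW.
have d_le1 : d x y <= 1 by rewrite -Hd1; apply: ler_sum2_entry.
case/andP: Halpha => alpha_gt0 alpha_lt1; case/andP: Hgamma => gamma_gt0 _.
rewrite -subr_ge0 QerrU_gapS; apply: addr_ge0; apply: mulr_ge0.
- by rewrite subr_ge0 -[1]mulr1 ler_pM // ltW.
- by rewrite subr_ge0 IHk.
- by rewrite mulr_ge0 // ltW.
- by rewrite subr_ge0 DPPi_cross_le.
Qed.
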